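(* Let $X \subset \mathbb{Z}^n$ and let $(X,d,c_1)$ be a digital metric space that is $c_1$-connected, where $d$ is any $\ell_p$ metric on $\mathbb{Z}^n$ ($1 \le p \le \infty$). Let $f: X \to X$ be a digital contraction map. Then $f$ is a constant function.
   Context: For $p,q \in \mathbb{Z}^n$, $p \neq q$, and $1 \le u \le n$, $p$ and $q$ are $c_u$-adjacent if $|p_i - q_i| = 1$ for at most $u$ indices $i$ and $p_j = q_j$ for all other indices $j$. A digital metric space is a triple $(X,d,\kappa)$ with $X\subset\mathbb{Z}^n$, $\kappa$ an adjacency on $X$ and $d$ a metric on $X$. The $\ell_p$ metric is $d(x,y) = (\sum_{i=1}^n |x_i-y_i|^p)^{1/p}$ for $1 \le p<\infty$ and $d(x,y) = \max_i |x_i - y_i|$ for $p=\infty$. $X$ is $c_1$-connected if any two points are joined by a finite sequence of points of $X$ with consecutive points equal or $c_1$-adjacent. $f$ is a digital contraction map if there is $\alpha \in (0,1)$ with $d(f(x),f(y)) \le \alpha\, d(x,y)$ for all $x,y \in X$. *)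

From HB Require Import structures.
From mathcomp Require Import all_boot all_order all_algebra.
From mathcomp Require Import all_classical all_reals ereal exp.
Set Implicit Arguments. Unset Strict Implicit. Unset Printing Implicit Defensive.
Import Order.TTheory GRing.Theory Num.Theory.
Local Open Scope ring_scope.

Definition pt (n : nat) := {ffun 'I_n -> int}.

Definition c_adj (n u : nat) (p q : pt n) : bool :=
  [&& p != q,
      [forall i, (p i == q i) || (`|p i - q i| == 1)] &
      (#|[set i | p i != q i]| <= u)%N].

Definition c1_connected (n : nat) (X : pt n -> Prop) : Prop :=
  forall x y, X x -> X y ->
    exists s : seq (pt n),
      path (fun a b => (a == b) || c_adj 1 a b) x s /\ last x s = y /\
      (forall z, z \in s -> X z).

Definition lp_dist (R : realType) (n : nat) (p : \bar R) (x y : pt n) : R :=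
  match p with
  | EFin r => (\sum_(i < n) ((`|x i - y i|%:~R : R) `^ r)) `^ (r^-1)
  | +oo%E => \big[Num.max/0]_(i < n) (`|x i - y i|%:~R : R)
  | -oo%E => 0
  end.

Definition digital_contraction (R : realType) (n : nat) (d : pt n -> pt n -> R)
  (X : pt n -> Prop) (f : pt n -> pt n) : Prop :=
  exists alpha : R, 0 < alpha < 1 /\
    forall x y, X x -> X y -> d (f x) (f y) <= alpha * d x y.

From HB Require Import structures.
From mathcomp Require Import all_boot all_order all_algebra.
From mathcomp Require Import all_classical all_reals ereal exp.
Import Order.TTheory GRing.Theory Num.Theory.
Local Open Scope ring_scope.

(* For every l_p metric with p >= 1, distinct points of Z^n are at distance at
   least 1 and c_1-adjacent points at distance exactly 1.  A contraction with
   ratio alpha < 1 therefore sends adjacent points to points at distance at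
   most alpha < 1, i.e. to the same point, and c_1-connectedness spreads this
   equality along paths to all of X. *)

Lemma path_last_eq {T : eqType} {U : Type} {e : rel T} {P : T -> Prop}
    {f : T -> U} {x : T} {s : seq T} :
  P x -> (forall z, z \in s -> P z) -> path e x s ->
  (forall u v, P u -> P v -> e u v -> f u = f v) ->
  f x = f (last x s).
Proof.
elim: s x => [|y s IHs] x //= Px Ps /andP[exy e_s] f_e.
have Py : P y by apply: Ps; rewrite inE eqxx.
have Ps' z : z \in s -> P z by move=> zs; apply: Ps; rewrite inE zs orbT.
by rewrite (f_e x y) // IHs.
Qed.

Lemma c1_connected_const {n : nat} {T : Type} {X : pt n -> Prop}
    {f : pt n -> T} :
  c1_connected X ->
  (forall u v, X u -> X v -> c_adj 1 u v -> f u = f v) ->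
  forall x y, X x -> X y -> f x = f y.
Proof.
move=> connX f_adj x y Xx Xy.
have [s [xs_path [<- Xs]]] := connX x y Xx Xy.
apply: (path_last_eq Xx Xs xs_path) => u v Xu Xv.
by case/orP=> [/eqP->//|]; apply: f_adj.
Qed.

Lemma pt_neqP {n : nat} {x y : pt n} : reflect (exists i, x i != y i) (x != y).
Proof.
apply: (iffP idP) => [|[i]]; last by apply: contraNneq => ->.
move=> xy; apply/existsP; apply: contraNT xy => /existsPn eq_xy.
by apply/eqP/ffunP => i; apply/eqP/negPn/eq_xy.
Qed.

Lemma c_adj_normB {n u : nat} {x y : pt n} (i : 'I_n) :
  c_adj u x y -> `|x i - y i| = (x i != y i)%:R.
Proof.
case/and3P=> _ /forallP/(_ i) + _.
by case: eqP => [->|_] /= /eqP; rewrite ?subrr.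
Qed.

Lemma c1_adj_card {n : nat} {x y : pt n} :
  c_adj 1 x y -> #|[set i | x i != y i]| = 1%N.
Proof.
case/and3P=> /pt_neqP[i xy_i] _; rewrite leq_eqVlt ltnS leqn0 => /orP[/eqP//|].
by rewrite cards_eq0 => /eqP/setP/(_ i); rewrite !inE xy_i.
Qed.

Section LpDistance.

Context {R : realType} {n : nat} {p : \bar R} (p_ge1 : (1%:E <= p)%E).

Lemma lp_dist_ge1 (x y : pt n) : x != y -> 1 <= lp_dist p x y.
Proof.
case/pt_neqP=> i xy_i.
have d_i_ge1 : 1 <= (`|x i - y i|%:~R : R).
  by rewrite ler1z -gtz0_ge1 normr_gt0 subr_eq0.
case: p p_ge1 => [r||] //=; last first.
  move=> _; apply: le_trans d_i_ge1 _.
  exact: (le_bigmax _ (fun j => (`|x j - y j|%:~R : R)) i).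
rewrite lee_fin => r_ge1.
have sum_ge1 : 1 <= \sum_(j < n) (`|x j - y j|%:~R : R) `^ r.
  rewrite (bigD1 i) //=.
  apply: le_trans (le_trans d_i_ge1 (le1r_powR d_i_ge1 r_ge1)) _.
  by rewrite lerDl sumr_ge0 // => j _; rewrite powR_ge0.
apply: (@le_trans _ _ (1 `^ r^-1)); first by rewrite powR1.
by apply: ge0_ler_powR; rewrite ?nnegrE ?invr_ge0 ?(le_trans ler01).
Qed.

Lemma lp_dist_c1_adj_le1 (x y : pt n) : c_adj 1 x y -> lp_dist p x y <= 1.
Proof.
move=> adj; case: p p_ge1 => [r||] //=; last first.
  move=> _; apply: bigmax_le => // i _.
  by rewrite (c_adj_normB i adj); case: (x i != y i).
rewrite lee_fin => r_ge1.
have -> : \sum_(i < n) (`|x i - y i|%:~R : R) `^ r = 1.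
  rewrite -[RHS]/(1%N%:R) -(c1_adj_card adj) -sum1_card natr_sum [RHS]big_mkcond.
  apply: eq_bigr => i _; rewrite (c_adj_normB i adj) inE.
  by case: (x i != y i); rewrite ?powR1 ?powR0 // gt_eqF // (lt_le_trans ltr01).
by rewrite powR1.
Qed.

Lemma lp_dist_c1_adj (x y : pt n) : c_adj 1 x y -> lp_dist p x y = 1.
Proof.
move=> adj; apply/le_anti; rewrite lp_dist_c1_adj_le1 // lp_dist_ge1 //.
by case/and3P: adj.
Qed.

End LpDistance.

Lemma contraction_c1_adj_eq {R : realType} {n : nat} {d : pt n -> pt n -> R}
    {X : pt n -> Prop} {f : pt n -> pt n} :
  (forall x y, x != y -> 1 <= d x y) ->
  (forall x y, c_adj 1 x y -> d x y = 1) ->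
  digital_contraction d X f ->
  forall u v, X u -> X v -> c_adj 1 u v -> f u = f v.
Proof.
move=> d_ge1 d_adj [a [/andP[_ a_lt1] f_contr]] u v Xu Xv uv.
apply/eqP; apply: contraT => /d_ge1 fuv_ge1.
have := le_trans fuv_ge1 (f_contr u v Xu Xv).
by rewrite d_adj // mulr1 leNgt a_lt1.
Qed.

Theorem mainTheorem4 (R : realType) (n : nat) (p : \bar R)
  (X : pt n -> Prop) (f : pt n -> pt n) :
  (1%:E <= p)%E ->
  c1_connected X ->
  (forall x, X x -> X (f x)) ->
  digital_contraction (lp_dist p) X f ->
  exists c : pt n, forall x, X x -> f x = c.
Proof.
(* [f] need not map [X] into itself for the argument. *)
move=> p_ge1 connX _ f_contr.
have f_adj := contraction_c1_adj_eq (lp_dist_ge1 p_ge1) (lp_dist_c1_adj p_ge1)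
  f_contr.
have [[x0 Xx0]|noX] := pselect (exists x, X x).
  by exists (f x0) => x Xx; apply: (c1_connected_const connX f_adj x x0).
by exists [ffun=> 0] => x Xx; case: noX; exists x.
Qed.
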